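(* Let $H=(V,\mathcal E)$ be a hypergraph with nonnegative hyperedge weights $w_e$ and total weight $W=\sum_{e\in\mathcal E}w_e$. Let $\epsilon\in(0,1)$ and suppose there is a vertex set $O\subseteq V$ with $|O|=r$ and $e(O)\ge (1-\epsilon)W$, where $e(S)=\sum_{e\in\mathcal E:\,e\subseteq S}w_e$. Let $(x^*,z^* )$ be an optimal solution of the linear program \[\min \sum_{v\in V}x_v \quad\text{s.t.}\quad z_e\le x_v\ \ \forall e\in\mathcal E,\ \forall v\in e;\qquad \sum_{e\in\mathcal E}w_e z_e\ge (1-\epsilon)W;\qquad 0\le x_v,z_e\le 1.\] For $\kappa>0$ let $K=\{v\in V: x^*_v\ge \kappa/(1+\kappa)\}$. Then \[W-e(K)\le (1+\kappa)\,\epsilon W\qquad\text{and}\qquad |K|\le \Bigl(1+\frac1\kappa\Bigr) r.\] *)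

(* A weighted hypergraph: vertices V : finType, hyperedges
   indexed by E : finType, each hyperedge e having vertex set ed e. *)
From mathcomp Require Import all_boot all_order all_algebra.
Set Implicit Arguments. Unset Strict Implicit. Unset Printing Implicit Defensive.
Import Order.TTheory GRing.Theory Num.Theory.
Local Open Scope ring_scope.

Definition total_weight (R : realFieldType) (E : finType) (w : E -> R) : R :=
  \sum_(e : E) w e.

Definition induced_weight (R : realFieldType) (V E : finType)
  (ed : E -> {set V}) (w : E -> R) (S : {set V}) : R :=
  \sum_(e : E | ed e \subset S) w e.

Definition lp_feasible (R : realFieldType) (V E : finType)
  (ed : E -> {set V}) (w : E -> R) (eps : R) (x : V -> R) (z : E -> R) : Prop :=
  [/\ (forall e v, v \in ed e -> z e <= x v),
      (1 - eps) * total_weight w <= \sum_(e : E) w e * z e,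
      (forall v, 0 <= x v <= 1) &
      (forall e, 0 <= z e <= 1)].

Definition lp_optimal (R : realFieldType) (V E : finType)
  (ed : E -> {set V}) (w : E -> R) (eps : R) (x : V -> R) (z : E -> R) : Prop :=
  lp_feasible ed w eps x z /\
  forall x' z', lp_feasible ed w eps x' z' ->
    \sum_(v : V) x v <= \sum_(v : V) x' v.

(** If [x v < c] for some vertex of [e], the LP
    forces [z e < c]; hence [\sum_e w e z e <= e(K) + c (W - e(K))] for
    [K = {v | c <= x v}], and the covering constraint
    [(1 - eps) W <= \sum_e w e z e] yields [(1 - c) (W - e(K)) <= eps W].
    On the other side, Markov's inequality gives [c |K| <= \sum_v x v], and the
    indicator of [O] is feasible, so optimality bounds [\sum_v x v] by [|O|].
    Taking [c = kappa / (1 + kappa)] gives both bounds. *)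
From mathcomp Require Import all_boot all_order all_algebra.
From mathcomp Require Import ring lra.
Import Order.TTheory GRing.Theory Num.Theory.
Set Implicit Arguments. Unset Strict Implicit.
Local Open Scope ring_scope.

Section ThresholdRounding.

Variables (R : realFieldType) (V E : finType) (ed : E -> {set V}) (w : E -> R).
Hypothesis w_ge0 : forall e, 0 <= w e.

Lemma total_weightE (S : {set V}) :
  total_weight w
  = induced_weight ed w S + \sum_(e | ~~ (ed e \subset S)) w e.
Proof. by rewrite /total_weight (bigID (fun e => ed e \subset S)). Qed.

Lemma weighted_sum_le_threshold (x : V -> R) (z : E -> R) (c : R) :
  (forall e v, v \in ed e -> z e <= x v) -> (forall e, z e <= 1) ->
  \sum_e w e * z e
  <= induced_weight ed w [set v | c <= x v]
     + c * (total_weight w - induced_weight ed w [set v | c <= x v]).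
Proof.
move=> z_le_x z_le1; set K := [set v | c <= x v].
rewrite (total_weightE K) [_ + \sum_(e | _) _]addrC addrK mulr_sumr.
rewrite /induced_weight (bigID (fun e => ed e \subset K)) /=.
apply: lerD; apply: ler_sum => e eK.
  by rewrite -[leRHS]mulr1 ler_wpM2l.
rewrite mulrC ler_wpM2r //.
have [v ve vK] := subsetPn eK.
by apply: le_trans (z_le_x e v ve) _; move: vK; rewrite inE -ltNge => /ltW.
Qed.

Lemma uncovered_weight_le (eps : R) (x : V -> R) (z : E -> R) (c : R) :
  lp_feasible ed w eps x z ->
  (1 - c) * (total_weight w - induced_weight ed w [set v | c <= x v])
  <= eps * total_weight w.
Proof.
case=> z_le_x covered _ z01.
have z_le1 e : z e <= 1 by case/andP: (z01 e).
have := le_trans covered (@weighted_sum_le_threshold x z c z_le_x z_le1).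
by lra.
Qed.

Lemma threshold_card_le (x : V -> R) (c : R) :
  (forall v, 0 <= x v) ->
  c * #|[set v | c <= x v]|%:R <= \sum_v x v.
Proof.
move=> x_ge0; rewrite -sum1_card natr_sum mulr_sumr.
rewrite [leRHS](bigID (mem [set v | c <= x v])) /=.
rewrite -[leLHS]addr0; apply: lerD; last exact: sumr_ge0.
by apply: ler_sum => v; rewrite mulr1 inE.
Qed.

Lemma indicator_feasible (eps : R) (O : {set V}) :
  (1 - eps) * total_weight w <= induced_weight ed w O ->
  lp_feasible ed w eps (fun v => (v \in O)%:R) (fun e => (ed e \subset O)%:R).
Proof.
have bool01 (b : bool) : 0 <= (b%:R : R) <= 1.
  by case: b; rewrite /= ?lexx ?ler01.
move=> O_covers; split=> //.
- move=> e v ve; case: (boolP (ed e \subset O)) => // eO.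
  by rewrite (subsetP eO v ve).
- rewrite /induced_weight big_mkcond /= in O_covers.
  by under eq_bigr => e _ do rewrite mulr_natr mulrb.
Qed.

Lemma lp_optimal_sum_le_card (eps : R) (O : {set V}) (x : V -> R) (z : E -> R) :
  lp_optimal ed w eps x z ->
  (1 - eps) * total_weight w <= induced_weight ed w O ->
  \sum_v x v <= #|O|%:R.
Proof.
move=> [_ x_min] O_covers.
apply: le_trans (x_min _ _ (indicator_feasible O_covers)) _.
rewrite -sum1_card natr_sum [leRHS]big_mkcond le_eqVlt; apply/orP; left.
by apply/eqP/eq_bigr => v _; case: (v \in O).
Qed.

End ThresholdRounding.

Theorem theorem1 (R : realFieldType) (V E : finType) (ed : E -> {set V})
  (w : E -> R) (eps : R) (O : {set V}) (r : nat) (x : V -> R) (z : E -> R)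
  (kappa : R) :
  (forall e, 0 <= w e) ->
  0 < eps < 1 ->
  #|O| = r ->
  (1 - eps) * total_weight w <= induced_weight ed w O ->
  lp_optimal ed w eps x z ->
  0 < kappa ->
  let K := [set v | kappa / (1 + kappa) <= x v] in
  total_weight w - induced_weight ed w K <= (1 + kappa) * eps * total_weight w /\
  (#|K|%:R <= (1 + kappa^-1) * r%:R :> R).
Proof.
move=> w_ge0 _ <- O_covers x_opt kappa_gt0 K.
have kappa1_gt0 : 0 < 1 + kappa by rewrite addr_gt0.
have [[_ _ x01 _] _] := x_opt.
have x_ge0 v : 0 <= x v by case/andP: (x01 v).
split.
- have := uncovered_weight_le w_ge0 (kappa / (1 + kappa)) x_opt.1.
  have -> : 1 - kappa / (1 + kappa) = (1 + kappa)^-1.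
    by field; rewrite gt_eqF.
  by rewrite -mulrA ler_pdivrMl.
- have := le_trans (threshold_card_le (kappa / (1 + kappa)) x_ge0)
                   (lp_optimal_sum_le_card x_opt O_covers).
  have -> : 1 + kappa^-1 = (kappa / (1 + kappa))^-1.
    by field; rewrite !gt_eqF.
  by rewrite ler_pdivlMl // divr_gt0.
Qed.
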